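(* Let $A$ be a finite abelian group with at least $3$ elements and let $S_1,\ldots,S_k$ be a distinct difference system in $A$. Call a subset of $A$ a basis if it has $3$ elements and is not a translate of a subset of any $S_i$. This yields a simple rank $3$ $A$-invariant matroid structure on $A$.
   Context: Subsets $S_1,\ldots,S_k$ of an abelian group $A$ form a distinct difference system if: (i) for any $i,j$ and any $x,y \in S_i$, $z,w \in S_j$ with $x \neq y$ and $z \neq w$, the equation $x-y=z-w$ implies $x=z$ and $y=w$; (ii) each $S_i$ contains $0$ and at least one other element; (iii) $S_i \cap S_j = \{0\}$ for $i \neq j$. A translate of $T$ is a set $\{t+a : t\in T\}$, $a \in A$. $A$ acts on itself by translation; a matroid on $A$ is $A$-invariant if translates of bases are bases. A matroid is simple if every circuit has at least three elements. *)

From mathcomp Require Import all_boot all_order all_algebra.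
Set Implicit Arguments. Unset Strict Implicit. Unset Printing Implicit Defensive.
Import GRing.Theory.
Local Open Scope ring_scope.

Definition distinct_difference_system (A : finZmodType) (k : nat)
  (S : 'I_k -> {set A}) : Prop :=
  [/\ (forall i j (x y z w : A), x \in S i -> y \in S i -> z \in S j -> w \in S j ->
        x != y -> z != w -> x - y = z - w -> x = z /\ y = w),
      (forall i, 0 \in S i /\ exists2 x, x \in S i & x != 0)
    & (forall i j, i != j -> S i :&: S j = [set 0])].

Definition translate (A : finZmodType) (T : {set A}) (a : A) : {set A} :=
  [set t + a | t in T].

(* Matroids on a finite ground set (the whole type), given by bases. *)
Section Matroid.
Variable T : finType.
Variable B : {set {set T}}.

Definition matroid_bases : Prop :=
  B != set0 /\
  forall B1 B2, B1 \in B -> B2 \in B -> forall x, x \in B1 :\: B2 ->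
    exists2 y, y \in B2 :\: B1 & (B1 :\ x) :|: [set y] \in B.

Definition has_rank (r : nat) : Prop := forall X, X \in B -> #|X| = r.

Definition independent (X : {set T}) : Prop := exists2 Y, Y \in B & X \subset Y.

Definition circuit (C : {set T}) : Prop :=
  ~ independent C /\ forall D : {set T}, D \proper C -> independent D.

Definition simple_matroid : Prop := forall C, circuit C -> (3 <= #|C|)%N.
End Matroid.

Definition invariant_bases (A : finZmodType) (B : {set {set A}}) : Prop :=
  forall X a, X \in B -> translate X a \in B.

Definition dds_bases (A : finZmodType) (k : nat) (S : 'I_k -> {set A}) : {set {set A}} :=
  [set X : {set A} | (#|X| == 3)%N &&
     ~~ [exists i : 'I_k, exists Tr : {set A}, exists a : A,
           (Tr \subset S i) && (X == translate Tr a)]].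

From mathcomp Require Import all_boot all_order all_algebra zify.
Set Implicit Arguments. Unset Strict Implicit. Unset Printing Implicit Defensive.
Import GRing.Theory.
Local Open Scope ring_scope.

(* Call the translates of the S_i lines.  The distinct difference property
   makes two distinct points lie on at most one line, and no line is all of A.
   The bases are then exactly the non-collinear triples.  Basis exchange
   follows from uniqueness of the line through the two points kept from B1:
   if every new point of B2 were collinear with them, all of B2 would lie on
   that single line.  Simplicity holds because every pair of points extends to
   a non-collinear triple (add a point off the line through them, if any). *)

Section FinSets.
Variable T : finType.

Lemma cards3 (x y z : T) : x != y -> y != z -> x != z -> #|[set x; y; z]| = 3%N.
Proof. by move=> nxy nyz nxz; rewrite -setUA !cardsU1 cards1 !inE negb_or nxy nxz nyz. Qed.

Lemma exists_notin2 (x y : T) : (2 < #|T|)%N -> exists z, z \notin [set x; y].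
Proof.
move=> T_gt2; have : (0 < #|~: [set x; y]|)%N.
  by move: T_gt2; rewrite -(cardsC [set x; y]) cards2; case: (x != y) => /=; lia.
by case/card_gt0P => z; rewrite inE; exists z.
Qed.

Lemma exists_superset_card (X : {set T}) n :
  (#|X| <= n <= #|T|)%N -> exists2 Y : {set T}, X \subset Y & #|Y| = n.
Proof.
elim: n => [|n IHn] /andP [leXn lenT]; first by exists X; [|apply/eqP; rewrite -leqn0].
have [ltXn|eqXn] := ltnP #|X| n.+1; last by exists X => //; apply/eqP; rewrite eqn_leq leXn.
have [|Y XY cardY] := IHn; first by rewrite -ltnS ltXn ltnW.
have /subsetPn [t _ tNY] : ~~ ([set: T] \subset Y).
  by apply: contraTN lenT => /subset_leq_card; rewrite cardsT cardY -ltnNge.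
exists (t |: Y); first exact: subset_trans XY (subsetU1 _ _).
by rewrite cardsU1 tNY cardY.
Qed.

End FinSets.

Section Matroids.
Variable T : finType.

Lemma independentS (B : {set {set T}}) (X Y : {set T}) :
  X \subset Y -> independent B Y -> independent B X.
Proof. by move=> XY [Z BZ YZ]; exists Z => //; apply: subset_trans YZ. Qed.

Lemma simple_matroid_of_pairs (B : {set {set T}}) :
  (1 < #|T|)%N -> (forall x y : T, x != y -> independent B [set x; y]) ->
  simple_matroid B.
Proof.
move=> T_gt1 indep_pair C [C_dep _]; rewrite leqNgt; apply/negP => C_small.
have [|Y CY /eqP/cards2P [x [y [nxy Y_xy]]]] := @exists_superset_card _ C 2.
  by rewrite -ltnS C_small.
by apply/C_dep/(independentS CY); rewrite Y_xy; apply: indep_pair.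
Qed.

End Matroids.

Section Translate.
Variable A : finZmodType.
Implicit Types (X Y : {set A}) (a b : A).

Lemma mem_translate X a y : (y \in translate X a) = (y - a \in X).
Proof.
apply/imsetP/idP => [[t Xt ->]|Xya]; first by rewrite addrK.
by exists (y - a); rewrite ?subrK.
Qed.

Lemma card_translate X a : #|translate X a| = #|X|.
Proof. exact/card_imset/addIr. Qed.

Lemma translateS X Y a : X \subset Y -> translate X a \subset translate Y a.
Proof. exact: imsetS. Qed.

Lemma translateD X a b : translate (translate X a) b = translate X (a + b).
Proof. by apply/setP => y; rewrite !mem_translate opprD addrA addrAC. Qed.

Lemma translateK X a : translate (translate X a) (- a) = X.
Proof. by apply/setP => y; rewrite translateD subrr mem_translate subr0. Qed.

Lemma translateNK X a : translate (translate X (- a)) a = X.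
Proof. by rewrite -{2}[a]opprK translateK. Qed.

End Translate.

Section Collinear.
Variables (A : finZmodType) (k : nat) (S : 'I_k -> {set A}).
Implicit Types (X Y : {set A}) (a b : A).

Definition collinear X : bool := [exists i, exists a, X \subset translate (S i) a].

Lemma collinearP X : reflect (exists i a, X \subset translate (S i) a) (collinear X).
Proof.
apply: (iffP existsP) => [[i /existsP [a XL]]|[i [a XL]]]; first by exists i, a.
by exists i; apply/existsP; exists a.
Qed.

Lemma collinearS X Y : X \subset Y -> collinear Y -> collinear X.
Proof.
move=> XY /collinearP [i [a YL]]; apply/collinearP; exists i, a.
exact: subset_trans YL.
Qed.

Lemma collinear_translate X a : collinear (translate X a) -> collinear X.
Proof.
case/collinearP => i [b XaL]; apply/collinearP; exists i, (b - a).
by rewrite -(translateK X a) -translateD translateS.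
Qed.

Lemma mem_dds_bases X : (X \in dds_bases S) = (#|X| == 3)%N && ~~ collinear X.
Proof.
rewrite inE; congr (_ && ~~ _); apply/existsP/collinearP.
  case=> i /existsP [Tr /existsP [a /andP [TrS /eqP ->]]].
  by exists i, a; apply: translateS.
case=> i [a XL]; exists i; apply/existsP; exists (translate X (- a)).
apply/existsP; exists a; rewrite translateNK eqxx andbT.
by rewrite -(translateK (S i) a) translateS.
Qed.

Lemma dds_bases_translate X a : X \in dds_bases S -> translate X a \in dds_bases S.
Proof.
rewrite !mem_dds_bases card_translate => /andP [-> X_ncol].
exact: contra (@collinear_translate X a) X_ncol.
Qed.

End Collinear.

Section DistinctDifferenceSystem.
Variables (A : finZmodType) (k : nat) (S : 'I_k -> {set A}).
Hypothesis S_dds : distinct_difference_system S.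

Lemma line_uniq i j a b u v : u != v ->
  u \in translate (S i) a -> v \in translate (S i) a ->
  u \in translate (S j) b -> v \in translate (S j) b ->
  translate (S i) a = translate (S j) b.
Proof.
case: S_dds => dist_diff _ disj; rewrite !mem_translate => nuv ua va ub vb.
have diffE c : u - c - (v - c) = u - v by rewrite opprB addrA subrK.
have neq c : u - c != v - c by apply: contra nuv => /eqP /addIr ->.
have [ua_ub _] := dist_diff i j _ _ _ _ ua va ub vb (neq a) (neq b)
  (etrans (diffE a) (esym (diffE b))).
have {ua_ub} eab : a = b by apply/oppr_inj/(addrI u).
subst b.
have [<- //|nij] := eqVneq i j.
have zero w : w - a \in S i -> w - a \in S j -> w - a = 0.
  by move=> wi wj; apply/set1P; rewrite -(disj _ _ nij) inE wi.
by move: nuv; rewrite -(inj_eq (addIr (- a))) (zero u ua ub) (zero v va vb) eqxx.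
Qed.

Lemma exists_notin_line i a : exists z, z \notin translate (S i) a.
Proof.
case: S_dds => dist_diff nontriv _; have [_ [x Sx nx0]] := nontriv i.
suff /subsetPn [w _ wN] : ~~ ([set: A] \subset S i).
  by exists (w + a); rewrite mem_translate addrK.
apply/negP => /subsetP full.
(* Otherwise x + x lies in S i and (x + x) - x = x - 0 repeats a difference. *)
have nxx : x + x != x by rewrite -subr_eq0 addrK.
have [xx_x _] := dist_diff i i (x + x) x x 0 (full _ (in_setT _)) Sx Sx
  (full _ (in_setT _)) nxx nx0 (etrans (addrK x x) (esym (subr0 x))).
by rewrite xx_x eqxx in nxx.
Qed.

Lemma not_collinear_off_line i a x y z : x != y ->
  x \in translate (S i) a -> y \in translate (S i) a -> z \notin translate (S i) a ->
  ~~ collinear S [set x; y; z].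
Proof.
move=> nxy xL yL; apply: contra => /collinearP [j [b /subsetP xyzL]].
have xL' : x \in translate (S j) b by rewrite xyzL // !inE eqxx.
have yL' : y \in translate (S j) b by rewrite xyzL // !inE eqxx orbT.
by rewrite (line_uniq nxy xL yL xL' yL') xyzL // !inE eqxx orbT.
Qed.

Lemma collinear_through p q (Y : {set A}) y0 : p != q -> y0 \in Y ->
  {in Y, forall t, collinear S [set p; q; t]} -> collinear S ([set p; q] :|: Y).
Proof.
move=> npq Yy0 col; have /collinearP [i [a /subsetP pqy0L]] := col y0 Yy0.
have pL : p \in translate (S i) a by rewrite pqy0L // !inE eqxx.
have qL : q \in translate (S i) a by rewrite pqy0L // !inE eqxx orbT.
apply/collinearP; exists i, a; apply/subsetP => t; rewrite inE => /orP [pq_t|Yt].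
  by rewrite pqy0L // inE pq_t.
have /collinearP [j [b /subsetP pqtL]] := col t Yt.
have pL' : p \in translate (S j) b by rewrite pqtL // !inE eqxx.
have qL' : q \in translate (S j) b by rewrite pqtL // !inE eqxx orbT.
by rewrite (line_uniq npq pL qL pL' qL') pqtL // !inE eqxx orbT.
Qed.

Lemma pair_extends_to_basis x y : (2 < #|A|)%N -> x != y ->
  exists z, [set x; y; z] \in dds_bases S.
Proof.
move=> A_gt2 nxy; have [/collinearP [i [a /subsetP xyL]]|xy_ncol] :=
  boolP (collinear S [set x; y]).
  have xL : x \in translate (S i) a by rewrite xyL // !inE eqxx.
  have yL : y \in translate (S i) a by rewrite xyL // !inE eqxx orbT.
  have [z zN] := exists_notin_line i a.
  have nxz : x != z by apply: contraNneq zN => <-.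
  have nyz : y != z by apply: contraNneq zN => <-.
  exists z; rewrite mem_dds_bases cards3 //=.
  exact: not_collinear_off_line nxy xL yL zN.
have [z] := exists_notin2 x y A_gt2.
rewrite !inE negb_or ![z == _]eq_sym => /andP [nxz nyz].
exists z; rewrite mem_dds_bases cards3 //=.
by apply: contra xy_ncol; apply: collinearS; apply: subsetUl.
Qed.

Lemma dds_bases_exchange B1 B2 :
  B1 \in dds_bases S -> B2 \in dds_bases S -> forall x, x \in B1 :\: B2 ->
  exists2 y, y \in B2 :\: B1 & (B1 :\ x) :|: [set y] \in dds_bases S.
Proof.
rewrite !mem_dds_bases => /andP [/eqP B1_3 _] /andP [/eqP B2_3 B2_ncol] x.
case/setDP => xB1 xNB2.
have /cards2P [p [q [npq B1x]]] : #|B1 :\ x| == 2%N.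
  by have := cardsD1 x B1; rewrite xB1 B1_3 add1n => -[<-].
have [y0 y0_new] : exists y0, y0 \in B2 :\: B1.
  apply/card_gt0P; rewrite cardsD setIC B2_3 -B1_3 -cardsD.
  by apply/card_gt0P; exists x; rewrite inE xB1 xNB2.
rewrite B1x; have [/exists_inP //|/exists_inPn none] :=
  boolP [exists y in B2 :\: B1, [set p; q; y] \in dds_bases S].
case/negP: B2_ncol.
apply: collinearS (collinear_through npq y0_new _).
  apply/subsetP => t B2t; rewrite inE; case: (boolP (t \in B1)) => [tB1|tNB1].
    have : t \in B1 :\ x by rewrite !inE tB1 andbT; apply: contraNneq xNB2 => <-.
    by rewrite B1x => ->.
  by rewrite in_setD tNB1 B2t orbT.
move=> t t_new.
have : t \notin [set p; q] by rewrite -B1x !inE negb_and (setDP t_new).2 orbT.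
rewrite !inE negb_or ![t == _]eq_sym => /andP [npt nqt].
by have := none t t_new; rewrite mem_dds_bases cards3 //= negbK.
Qed.

End DistinctDifferenceSystem.

Theorem proposition3p24 (A : finZmodType) (k : nat) (S : 'I_k -> {set A}) :
  (3 <= #|A|)%N ->
  distinct_difference_system S ->
  let B := dds_bases S in
  matroid_bases B /\ has_rank B 3 /\ simple_matroid B /\ invariant_bases B.
Proof.
move=> A_gt2 S_dds B.
have indep_pair x y : x != y -> independent B [set x; y].
  move=> nxy; have [z xyzB] := pair_extends_to_basis S_dds A_gt2 nxy.
  by exists [set x; y; z]; last exact: subsetUl.
split; [split|split; [|split]].
- have /card_gt2P [x [y [z [_ [nxy _ _]]]]] := A_gt2.
  have [w xywB] := pair_extends_to_basis S_dds A_gt2 nxy.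
  by apply/set0Pn; exists [set x; y; w].
- exact: dds_bases_exchange.
- by move=> X; rewrite mem_dds_bases => /andP [/eqP].
- by apply: simple_matroid_of_pairs indep_pair; apply: ltnW.
- exact: dds_bases_translate.
Qed.
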